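(* Consider the two-user scalar fading multiple access channel and the low-level game described in the context. For every measurable set $D_1\subseteq(0,\infty)^2$ (the base-station strategy) and every fading distribution satisfying the standing assumptions, the low-level power allocation game induced by $D_1$ has a (pure-strategy) Nash equilibrium.
   Context: Channel: $y=\sqrt{h_1}x_1+\sqrt{h_2}x_2+z$, noise variance $\sigma^2>0$; the fading $\mathbf h=(h_1,h_2)$ is stationary ergodic with a stationary distribution on $(0,\infty)^2$ having a continuous bounded density $f$; channel state is known to all transmitters and the receiver. User $i$ has average power budget $\bar P_i>0$; its feasible set is $\mathcal F_i=\{\mathcal P_i:(0,\infty)^2\to[0,\infty)\ \text{measurable}: E[\mathcal P_i(\mathbf h)]\le\bar P_i\}$. The base station uses successive decoding: for states $(h_1,h_2)\in D_1$ it decodes user 1 first, for states in $D_1^c$ it decodes user 2 first. Given $D_1$, the low-level game has the two users as players with strategy sets $\mathcal F_1,\mathcal F_2$ and payoffs $\bar R_1(D_1,\mathcal P_1,\mathcal P_2)=\iint\tfrac12\log_2\Big(1+\frac{\mathcal P_1(h_1,h_2)h_1}{\sigma^2+\mathcal P_2(h_1,h_2)h_2\,I_{\{(h_1,h_2)\in D_1\}}}\Big)f(h_1,h_2)\,dh_1dh_2$, $\bar R_2(D_1,\mathcal P_1,\mathcal P_2)=\iint\tfrac12\log_2\Big(1+\frac{\mathcal P_2(h_1,h_2)h_2}{\sigma^2+\mathcal P_1(h_1,h_2)h_1\,I_{\{(h_1,h_2)\in D_1^c\}}}\Big)f(h_1,h_2)\,dh_1dh_2$, where $I$ is the indicator function.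 A Nash equilibrium is a pair $(\mathcal P_1^*,\mathcal P_2^* )$ such that neither user can increase its own payoff by unilaterally changing its policy within its feasible set. *)

From HB Require Import structures.
From mathcomp Require Import all_boot all_order all_algebra.
From mathcomp Require Import all_classical all_reals all_analysis.
Set Implicit Arguments. Unset Strict Implicit. Unset Printing Implicit Defensive.
Import Order.TTheory GRing.Theory Num.Theory numFieldNormedType.Exports.
Local Open Scope classical_set_scope.
Local Open Scope ring_scope.

Definition quadrant (R : realType) : set (R * R) :=
  [set h | 0 < h.1 /\ 0 < h.2].
Arguments quadrant R : clear implicits.

Definition leb2 (R : realType) := (@lebesgue_measure R \x @lebesgue_measure R)%E.
Arguments leb2 R : clear implicits.

Definition log2 (R : realType) (x : R) : R := ln x / ln 2.

Definition fading_density (R : realType) (f : R * R -> R) : Prop :=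
  [/\ forall h, quadrant R h -> 0 <= f h,
      (\int[leb2 R]_(h in quadrant R) (f h)%:E = 1)%E,
      {within quadrant R, continuous f} &
      exists M : R, forall h, quadrant R h -> f h <= M].

Definition expect (R : realType) (f : R * R -> R) (P : R * R -> R) : \bar R :=
  (\int[leb2 R]_(h in quadrant R) (P h * f h)%:E)%E.

Definition feasible (R : realType) (f : R * R -> R) (Pbar : R)
    (P : R * R -> R) : Prop :=
  [/\ measurable_fun (quadrant R) P,
      forall h, quadrant R h -> 0 <= P h &
      (expect f P <= Pbar%:E)%E].

(* payoff of user 1 (decoded first on D1, so user 2 interferes there) *)
Definition rate1 (R : realType) (f : R * R -> R) (sigma2 : R)
    (D1 : set (R * R)) (P1 P2 : R * R -> R) : \bar R :=
  (\int[leb2 R]_(h in quadrant R)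
     ((2^-1 * log2 (1 + P1 h * h.1 / (sigma2 + P2 h * h.2 * \1_D1 h))) * f h)%:E)%E.

(* payoff of user 2 (decoded first on the complement of D1) *)
Definition rate2 (R : realType) (f : R * R -> R) (sigma2 : R)
    (D1 : set (R * R)) (P1 P2 : R * R -> R) : \bar R :=
  (\int[leb2 R]_(h in quadrant R)
     ((2^-1 * log2 (1 + P2 h * h.2 / (sigma2 + P1 h * h.1 * \1_(~` D1) h))) * f h)%:E)%E.

Definition nash_equilibrium (R : realType) (f : R * R -> R) (sigma2 Pbar1 Pbar2 : R)
    (D1 : set (R * R)) (P1 P2 : R * R -> R) : Prop :=
  [/\ feasible f Pbar1 P1, feasible f Pbar2 P2,
      (forall P1', feasible f Pbar1 P1' ->
         (rate1 f sigma2 D1 P1' P2 <= rate1 f sigma2 D1 P1 P2)%E) &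
      (forall P2', feasible f Pbar2 P2' ->
         (rate2 f sigma2 D1 P1 P2' <= rate2 f sigma2 D1 P1 P2)%E)].

From HB Require Import structures.
From mathcomp Require Import all_boot all_order all_algebra.
From mathcomp Require Import all_classical all_reals all_analysis.
From mathcomp Require Import ring lra measurable_realfun.
Import Order.TTheory GRing.Theory Num.Theory numFieldNormedType.Exports.
Local Open Scope classical_set_scope.
Local Open Scope ring_scope.

(* For a fixed interference, a user's best response under its power budget is
   water-filling against its noise-to-gain ratio n, P = max(0, lam - n), with
   the water level lam chosen so that the budget is used exactly; this follows
   pointwise from the Lagrangian inequality ln x - ln y <= (x - y) / y.
   A user only suffers interference where it is decoded first, and there the
   other user, decoded last, sees no interference and water-fills against its
   bare noise.  Hence best responses are determined by the two water levels, and
   the level of each user is a nondecreasing function of the level of the other.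
   Either D1 or its complement has positive mass, so one of these two maps is
   bounded, and a nondecreasing self-map of an interval [0, M] has a fixed point
   (the supremum of its post-fixed points).  Such a fixed point of the composed
   map is a Nash equilibrium. *)

Section open_measurable_pair.
Variable R : realType.

Definition rat_box (q : (rat * rat) * (rat * rat)) : set (R * R) :=
  `](ratr q.1.1 : R), ratr q.1.2[ `*` `](ratr q.2.1 : R), ratr q.2.2[.

Lemma open_measurable_pair (A : set (R * R)) : open A -> measurable A.
Proof.
move=> oA; have -> : A = \bigcup_(q in [set q | rat_box q `<=` A]) rat_box q.
  apply/seteqP; split=> [x Ax|x [q qA /qA]] //.
  have /nbhs_ballP[e /= e0 xeA] := oA x Ax.
  have [a /[!in_itv]/= /andP[a1 a2]] := @rat_in_itvoo R (x.1 - e) x.1 ltac:(lra).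
  have [b /[!in_itv]/= /andP[b1 b2]] := @rat_in_itvoo R x.1 (x.1 + e) ltac:(lra).
  have [c /[!in_itv]/= /andP[c1 c2]] := @rat_in_itvoo R (x.2 - e) x.2 ltac:(lra).
  have [d /[!in_itv]/= /andP[d1 d2]] := @rat_in_itvoo R x.2 (x.2 + e) ltac:(lra).
  exists ((a, b), (c, d)); last by rewrite /rat_box /= !in_itv /= a2 b1 c2 d1.
  move=> y; rewrite /rat_box /= !in_itv /= => -[/andP[ya yb] /andP[yc yd]].
  by apply: xeA; split; rewrite /ball /= ltr_norml; apply/andP; split; lra.
rewrite bigcup_mkcond; apply: countable_bigcupT_measurable => [|q].
  exact: countableP.
by case: ifPn => // _; apply: measurableX; exact: measurable_itv.
Qed.

Lemma open_continuous_measurable_fun_pair (D : set (R * R)) (f : R * R -> R) :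
  open D -> {within D, continuous f} -> measurable_fun D f.
Proof.
move=> oD /continuousP cf; apply: (measurability _ (RGenOpens.measurableE R)).
move=> _ [_ [a [b ->] <-]].
have /open_subspaceP[V oV VD] : open (f @^-1` `]a, b[ : set (subspace D)).
  exact/cf/interval_open.
by rewrite setIC -VD; apply: measurableI; exact: open_measurable_pair.
Qed.

Lemma open_quadrant : open (quadrant R).
Proof.
have -> : quadrant R = fst @^-1` `]0, +oo[ `&` snd @^-1` `]0, +oo[.
  by apply/seteqP; split=> h; rewrite /quadrant /= !in_itv /= !andbT.
apply: openI; apply: open_comp; try exact: rray_open.
- by move=> x _; exact: cvg_fst.
- by move=> x _; exact: cvg_snd.
Qed.

End open_measurable_pair.

Lemma measurable_funV d (T : measurableType d) (R : realType) (D : set T) (g : T -> R) :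
  measurable_fun D g -> (forall t, D t -> 0 < g t) -> measurable_fun D (fun t => (g t)^-1).
Proof.
move=> mg g0; have minv : measurable_fun (`]0, +oo[%classic : set R) (@GRing.inv R).
  apply: open_continuous_measurable_fun; first exact: rray_open.
  by move=> x /[!(inE, in_itv)] /= /andP[x0 _]; apply: inv_continuous; rewrite gt_eqF.
apply: (measurable_comp _ _ minv mg); first exact: measurable_itv.
by move=> _ [t Dt <-]; rewrite /= in_itv /= andbT g0.
Qed.

Section real_lemmas.
Context {R : realType}.

Lemma le_lnB (x y : R) : 0 < x -> 0 < y -> ln x - ln y <= (x - y) / y.
Proof.
move=> x0 y0; have xy0 : 0 < x / y by rewrite divr_gt0.
have -> : ln x - ln y = ln (1 + (x - y) / y).
  have -> : 1 + (x - y) / y = x / y by rewrite mulrBl divff ?gt_eqF // addrCA subrr addr0.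
  by rewrite lnM ?posrE ?invr_gt0 // lnV.
by apply: le_ln1Dx; rewrite mulrBl divff ?gt_eqF //; lra.
Qed.

Definition waterfill (l m : R) : R := Num.max 0 (l - m).

Lemma waterfillE l m : waterfill l m = if m <= l then l - m else 0.
Proof. by rewrite /waterfill maxEle subr_ge0; case: ifP. Qed.

Lemma waterfill_ge0 l m : 0 <= waterfill l m.
Proof. by rewrite le_max lexx. Qed.

Lemma waterfill_le_l l l' m : l <= l' -> waterfill l m <= waterfill l' m.
Proof. by move=> ll'; rewrite /waterfill le_max2 // lerB. Qed.

Lemma waterfill_le_r l m m' : m <= m' -> waterfill l m' <= waterfill l m.
Proof. by move=> mm'; rewrite /waterfill le_max2 // lerB. Qed.

Lemma waterfill_lipschitz l l' m : l <= l' -> waterfill l' m <= waterfill l m + (l' - l).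
Proof. by move=> ll'; rewrite !waterfillE; do 2 case: ifPn; rewrite -?ltNge => *; lra. Qed.

Lemma waterfill_argmax (n lam p : R) : 0 < n -> 0 < lam -> 0 <= p ->
  ln (1 + p / n) - p / lam <= ln (1 + waterfill lam n / n) - waterfill lam n / lam.
Proof.
move=> n0 l0 p0; rewrite waterfillE; case: ifPn => [nl|]; last first.
  rewrite -ltNge => lam_lt_n; rewrite !mul0r addr0 ln1 subr0 subr_le0.
  apply: le_trans (le_ln1Dx _) _; first by rewrite (lt_le_trans _ (divr_ge0 p0 (ltW n0))).
  by rewrite ler_wpM2l // lef_pV2 ?posrE // ltW.
have pos q : 0 <= q -> 0 < 1 + q / n.
  by move=> q0; have := divr_ge0 q0 (ltW n0); lra.
have := le_lnB _ _ (pos p p0) (pos (lam - n) ltac:(by rewrite subr_ge0)).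
suff -> : (1 + p / n - (1 + (lam - n) / n)) / (1 + (lam - n) / n) = (p - (lam - n)) / lam.
  lra.
by field; rewrite ?gt_eqF //; lra.
Qed.

Lemma nondecreasing_fixpoint (T : R -> R) (M : R) :
  (forall x y, 0 <= x -> x <= y -> T x <= T y) ->
  (forall x, 0 <= x -> 0 <= T x <= M) -> exists2 x, 0 <= x & T x = x.
Proof.
move=> Tle Tb; pose E := [set x | 0 <= x <= M /\ x <= T x].
have /andP[T00 T0M] := Tb 0 (lexx 0).
have E0 : E 0 by rewrite /E /= lexx (le_trans T00 T0M).
have hE : has_sup E by split; [exists 0 | exists M => x [/andP[]]].
have s0 : 0 <= sup E by exact: sup_upper_bound.
have sT : sup E <= T (sup E).
  apply: ge_sup; first by exists 0.
  move=> x Ex; have xs : x <= sup E by exact: sup_upper_bound.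
  by case: Ex => /andP[x0 _] xT; exact: le_trans xT (Tle _ _ x0 xs).
have /andP[Ts0 TsM] := Tb _ s0.
exists (sup E) => //; apply/eqP; rewrite eq_le sT andbT.
by apply: sup_upper_bound => //; split; [rewrite Ts0 | exact: Tle].
Qed.

Lemma inf_superlevel_attained (g : R -> R) (c : R) :
  g 0 = 0 -> 0 < c -> (forall l l', 0 <= l <= l' -> g l' <= g l + (l' - l)) ->
  [set l | 0 <= l /\ c <= g l] !=set0 ->
  g (inf [set l | 0 <= l /\ c <= g l]) = c /\ 0 < inf [set l | 0 <= l /\ c <= g l].
Proof.
set S := [set l | _ /\ _] => g0 c0 glip S0; set L := inf S.
have lbS : has_lbound S by exists 0 => l [].
have L0 : 0 <= L by apply: lb_le_inf => // l [].
have LS l : S l -> L <= l by move=> Sl; exact: ge_inf.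
have Lpos : g L <> 0 -> 0 < L.
  by move=> gL0; rewrite lt_neqAle L0 andbT; apply/eqP => L0'; rewrite -L0' in gL0.
have [gLc|cgL|gLc] := ltgtP (g L) c; last by split=> //; apply: Lpos; lra.
- suff : L + (c - g L) <= L by lra.
  apply: lb_le_inf => // l [l0 cgl].
  have Ll : 0 <= L <= l by rewrite L0 LS.
  by have := glip _ _ Ll; lra.
- have L0' : 0 < L by apply: Lpos; lra.
  pose e := Num.min L ((g L - c) / 2).
  have [eL egL] : e <= L /\ e <= (g L - c) / 2 by split; rewrite ge_min lexx ?orbT.
  have e0 : 0 < e by rewrite lt_min L0' /=; lra.
  suff : L <= L - e by lra.
  have eLL : 0 <= L - e <= L by apply/andP; split; lra.
  by apply: LS; split; [lra | have := glip _ _ eLL; lra].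
Qed.

End real_lemmas.

Lemma ge0_integral_le_lagrangian d (T : measurableType d) (R : realType)
    (mu : {measure set T -> \bar R}) (D : set T) (F G p q : T -> R) (k c : R) :
  measurable D -> measurable_fun D F -> measurable_fun D G ->
  measurable_fun D p -> measurable_fun D q ->
  (forall t, D t -> 0 <= F t) -> (forall t, D t -> 0 <= G t) ->
  (forall t, D t -> 0 <= p t) -> (forall t, D t -> 0 <= q t) -> 0 <= k ->
  (forall t, D t -> F t + k * p t <= G t + k * q t) ->
  (\int[mu]_(t in D) (p t)%:E = c%:E)%E -> (\int[mu]_(t in D) (q t)%:E <= c%:E)%E ->
  (\int[mu]_(t in D) (F t)%:E <= \int[mu]_(t in D) (G t)%:E)%E.
Proof.
move=> mD mF mG mp mq F0 G0 p0 q0 k0 FG pc qc.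
have mkE (g : T -> R) : measurable_fun D g -> measurable_fun D (fun t => (k * g t)%:E).
  by move=> mg; apply/measurable_EFinP; apply: measurable_funM => //; exact: measurable_cst.
have kg0 (g : T -> R) : (forall t, D t -> 0 <= g t) -> forall t, D t -> (0 <= (k * g t)%:E)%E.
  by move=> g0 t Dt; rewrite lee_fin mulr_ge0 ?g0.
have intD (g h : T -> R) : measurable_fun D g -> measurable_fun D h ->
    (forall t, D t -> 0 <= g t) -> (forall t, D t -> 0 <= h t) ->
    (\int[mu]_(t in D) (g t + k * h t)%:E =
     \int[mu]_(t in D) (g t)%:E + k%:E * \int[mu]_(t in D) (h t)%:E)%E.
  move=> mg mh g0 h0; under eq_integral do rewrite EFinD.
  have g0E t : D t -> (0 <= (g t)%:E)%E by move=> Dt; rewrite lee_fin g0.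
  have h0E t : D t -> (0 <= (h t)%:E)%E by move=> Dt; rewrite lee_fin h0.
  rewrite (ge0_integralD _ mD g0E _ (kg0 _ h0) (mkE _ mh)); last exact/measurable_EFinP.
  congr (_ + _)%E; under eq_integral do rewrite EFinM.
  by rewrite (ge0_integralZl_EFin _ mD h0E) //; exact/measurable_EFinP.
have : (\int[mu]_(t in D) (F t + k * p t)%:E <= \int[mu]_(t in D) (G t + k * q t)%:E)%E.
  apply: ge0_le_integral => //.
  - by move=> t Dt; rewrite lee_fin addr_ge0 ?mulr_ge0 ?F0 ?p0.
  - by apply/measurable_EFinP; apply: measurable_funD => //; exact/measurable_EFinP/mkE.
  - by apply/measurable_EFinP; apply: measurable_funD => //; exact/measurable_EFinP/mkE.
rewrite intD // intD // pc => FGc.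
have : (\int[mu]_(t in D) (F t)%:E + k%:E * c%:E <= \int[mu]_(t in D) (G t)%:E + k%:E * c%:E)%E.
  by apply: le_trans FGc _; rewrite leeD2l // lee_wpmul2l // lee_fin.
by rewrite leeD2rE // -EFinM.
Qed.

Lemma measurable_waterfill d (T : measurableType d) (R : realType) (D : set T)
    (n : T -> R) l : measurable_fun D n -> measurable_fun D (fun t => waterfill l (n t)).
Proof.
move=> mn; apply: measurable_maxr; first exact: measurable_cst.
by apply: measurable_funB => //; exact: measurable_cst.
Qed.

Section water_filling.
Context {R : realType} {d : measure_display} {T : measurableType d}.
Context {mu : {measure set T -> \bar R}} {D : set T} {f : T -> R}.

Definition prob_density : Prop :=
  [/\ measurable D, measurable_fun D f, (forall t, D t -> 0 <= f t) &
      (\int[mu]_(t in D) (f t)%:E = 1)%E].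

(* For [n >= 0] the integral is finite, see [power_EFin]. *)
Definition power (n : T -> R) (l : R) : R :=
  fine (\int[mu]_(t in D) (waterfill l (n t) * f t)%:E).

Definition water_level (Pb : R) (n : T -> R) : R :=
  inf [set l | 0 <= l /\ Pb <= power n l].

Hypothesis density_f : prob_density.
Let mD : measurable D. Proof. by case: density_f. Qed.
Let mf : measurable_fun D f. Proof. by case: density_f. Qed.
Let f0 t : D t -> 0 <= f t. Proof. by case: density_f => _ _ + _; apply. Qed.
Let f1 : (\int[mu]_(t in D) (f t)%:E = 1)%E. Proof. by case: density_f. Qed.

Let fE0 t : D t -> (0 <= (f t)%:E)%E. Proof. by move=> Dt; rewrite lee_fin f0. Qed.
Let mfE : measurable_fun D (fun t => (f t)%:E). Proof. exact/measurable_EFinP. Qed.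

Let mEf (g : T -> R) : measurable_fun D g -> measurable_fun D (fun t => (g t * f t)%:E).
Proof. by move=> mg; apply/measurable_EFinP; exact: measurable_funM. Qed.

Let waterfill_f_ge0 (n : T -> R) l t : D t -> (0 <= (waterfill l (n t) * f t)%:E)%E.
Proof. by move=> Dt; rewrite lee_fin mulr_ge0 ?waterfill_ge0 ?f0. Qed.

Lemma density_mass_split (A : set T) : measurable A ->
  (0 < \int[mu]_(t in D `&` A) (f t)%:E)%E \/ (0 < \int[mu]_(t in D `&` ~` A) (f t)%:E)%E.
Proof.
move=> mA; have DI : D `&` A `|` D `&` ~` A = D by rewrite -setIUr setUCr setIT.
have : (\int[mu]_(t in D `&` A) (f t)%:E + \int[mu]_(t in D `&` ~` A) (f t)%:E = 1)%E.
  rewrite -ge0_integral_setU ?DI //; [exact: measurableI | exact/measurableI/measurableC |].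
  by apply/disj_setPS => t [[_ ?] [_ ?]].
have ge0I (B : set T) : (0 <= \int[mu]_(t in D `&` B) (f t)%:E)%E.
  by apply: integral_ge0 => t [Dt _]; exact: fE0.
rewrite !lt_neqAle !ge0I !andbT.
have [<-|] := eqVneq 0%E (\int[mu]_(t in D `&` A) (f t)%:E)%E; last by left.
have [<-|] := eqVneq 0%E (\int[mu]_(t in D `&` ~` A) (f t)%:E)%E; last by right.
by rewrite adde0 => -[] /eqP; rewrite eq_sym oner_eq0.
Qed.

Section fixed_noise.
Context {n : T -> R}.
Hypotheses (mn : measurable_fun D n) (n0 : forall t, D t -> 0 <= n t).

Lemma integral_waterfill_lipschitz l l' : l <= l' ->
  (\int[mu]_(t in D) (waterfill l' (n t) * f t)%:E <=
   \int[mu]_(t in D) (waterfill l (n t) * f t)%:E + (l' - l)%:E)%E.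
Proof.
move=> ll'; have mc : measurable_fun D (fun t => ((l' - l) * f t)%:E).
  exact/mEf/measurable_cst.
have -> : (l' - l)%:E = (\int[mu]_(t in D) ((l' - l) * f t)%:E)%E.
  under eq_integral do rewrite EFinM.
  by rewrite (ge0_integralZl_EFin _ mD fE0 mfE) ?subr_ge0 // f1 mule1.
rewrite -ge0_integralD //; last 3 first.
- exact: waterfill_f_ge0.
- exact/mEf/measurable_waterfill.
- by move=> t Dt; rewrite lee_fin mulr_ge0 ?subr_ge0 ?f0.
apply: ge0_le_integral => //.
- exact: waterfill_f_ge0.
- exact/mEf/measurable_waterfill.
- by apply: emeasurable_funD => //; exact/mEf/measurable_waterfill.
- move=> t Dt; rewrite -EFinD lee_fin -mulrDl ler_wpM2r ?f0 //.
  exact: waterfill_lipschitz.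
Qed.

Lemma integral_waterfill0 : (\int[mu]_(t in D) (waterfill 0 (n t) * f t)%:E = 0)%E.
Proof.
apply: integral0_eq => t Dt; rewrite /waterfill sub0r.
by rewrite max_l ?mul0r // oppr_le0 n0.
Qed.

Lemma power_EFin l : 0 <= l ->
  (\int[mu]_(t in D) (waterfill l (n t) * f t)%:E = (power n l)%:E)%E.
Proof.
move=> l0; have := integral_waterfill_lipschitz _ _ l0.
rewrite integral_waterfill0 add0e subr0 => le_l.
have ge0 : (0 <= \int[mu]_(t in D) (waterfill l (n t) * f t)%:E)%E.
  by apply: integral_ge0 => t; exact: waterfill_f_ge0.
by rewrite /power fineK // ge0_fin_numE // (le_lt_trans le_l) ?ltry.
Qed.

Lemma power0 : power n 0 = 0.
Proof. by rewrite /power integral_waterfill0. Qed.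

Lemma power_lipschitz l l' : 0 <= l <= l' -> power n l' <= power n l + (l' - l).
Proof.
move=> /andP[l0 ll']; have := integral_waterfill_lipschitz _ _ ll'.
by rewrite !power_EFin ?(le_trans l0) // -EFinD lee_fin.
Qed.

Lemma power_water_level Pb : 0 < Pb -> [set l | 0 <= l /\ Pb <= power n l] !=set0 ->
  power n (water_level Pb n) = Pb /\ 0 < water_level Pb n.
Proof.
by move=> Pb0; apply: inf_superlevel_attained; [exact: power0 | | exact: power_lipschitz].
Qed.

End fixed_noise.

Lemma water_level_le Pb n l : 0 <= l -> Pb <= power n l -> water_level Pb n <= l.
Proof. by move=> l0 Pbl; apply: ge_inf => //; exists 0 => ? []. Qed.

Lemma power_le_noise (n n' : T -> R) l : measurable_fun D n -> measurable_fun D n' ->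
  (forall t, D t -> 0 <= n t <= n' t) -> 0 <= l -> power n' l <= power n l.
Proof.
move=> mn mn' nn' l0.
have n0 t : D t -> 0 <= n t by move=> /nn' /andP[].
have n'0 t : D t -> 0 <= n' t by move=> Dt; have /andP[/le_trans] := nn' t Dt; apply.
rewrite -lee_fin -!power_EFin //; apply: ge0_le_integral => //.
- exact: waterfill_f_ge0.
- exact/mEf/measurable_waterfill.
- exact/mEf/measurable_waterfill.
- move=> t Dt; rewrite lee_fin ler_wpM2r ?f0 //; apply: waterfill_le_r.
  by have /andP[] := nn' t Dt.
Qed.

Lemma water_level_le_noise Pb (n n' : T -> R) : measurable_fun D n -> measurable_fun D n' ->
  (forall t, D t -> 0 <= n t <= n' t) -> [set l | 0 <= l /\ Pb <= power n' l] !=set0 ->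
  water_level Pb n <= water_level Pb n'.
Proof.
move=> mn mn' nn' S0; apply: lb_le_inf => // l [l0 Pbl]; apply: water_level_le => //.
exact: le_trans Pbl (power_le_noise _ _ _ mn mn' nn' l0).
Qed.

Lemma exists_sublevel_mass (n : T -> R) (A : set T) : measurable_fun D n -> measurable A ->
  (0 < \int[mu]_(t in D `&` A) (f t)%:E)%E ->
  exists k : nat, (0 < \int[mu]_(t in D `&` n @^-1` `]-oo, k%:R] `&` A) (f t)%:E)%E.
Proof.
move=> mn mA IA; apply/not_existsP => Ik.
pose F k := D `&` n @^-1` `]-oo, k%:R] `&` A.
have mF k : measurable (F k) by apply: measurableI => //; exact: mn (measurable_itv _).
have FD k : F k `<=` D by move=> t [[]].
have Ik0 k : (\int[mu]_(t in F k) (f t)%:E = 0)%E.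
  apply/eqP; rewrite eq_le integral_ge0 ?andbT; last by move=> t /FD; exact: fE0.
  by rewrite leNgt; apply/negP; exact: Ik.
have UF : \bigcup_k F k = D `&` A.
  apply/seteqP; split=> [t [k _ [[]]]|t [Dt At]] //.
  exists (Num.trunc `|n t|).+1 => //; split=> //; split=> //=.
  rewrite in_itv /=; apply/ltW/le_lt_trans/truncnS_gt; exact: ler_norm.
have : (\int[mu]_(t in F k) (f t)%:E)%E @[k --> \oo] --> (\int[mu]_(t in D `&` A) (f t)%:E)%E.
  rewrite -UF; apply: ge0_nondecreasing_set_cvg_integral => //.
  - move=> i j ij; apply/subsetPset => t [[Dt /=]]; rewrite !in_itv /= => nti At.
    by split=> //; split=> //; apply: le_trans nti _; rewrite ler_nat.
  - by move=> k; exact: measurable_funS mfE.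
  - by move=> k t /FD; exact: fE0.
rewrite (funext Ik0) => /(cvg_unique (@ereal_hausdorff R) (cvg_cst 0%E)) I0.
by move: IA; rewrite -I0 ltxx.
Qed.

Lemma integral_waterfill_unbounded (n : T -> R) (A : set T) (Pb : R) :
  measurable_fun D n -> measurable A -> 0 <= Pb ->
  (0 < \int[mu]_(t in D `&` A) (f t)%:E)%E ->
  exists2 l, 0 <= l & (Pb%:E <= \int[mu]_(t in D `&` A) (waterfill l (n t) * f t)%:E)%E.
Proof.
move=> mn mA Pb0 IA; have [k Ik] := exists_sublevel_mass _ _ mn mA IA.
set F := D `&` _ `&` A in Ik.
have mF : measurable F by apply: measurableI => //; exact: mn (measurable_itv _).
have FD : F `<=` D by move=> t [[]].
have mfF : measurable_fun F (fun t => (f t)%:E) by exact: measurable_funS mfE.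
have IF1 : (\int[mu]_(t in F) (f t)%:E <= 1)%E.
  by have := ge0_subset_integral mu mF mD mfE fE0 FD; rewrite f1.
move: Ik IF1; case E : (\int[mu]_(t in F) (f t)%:E)%E => [c||] //; rewrite lte_fin => c0 _.
have Pbc0 : 0 <= Pb / c by rewrite divr_ge0 // ltW.
exists (k%:R + Pb / c); first by rewrite addr_ge0.
have -> : Pb%:E = ((Pb / c)%:E * \int[mu]_(t in F) (f t)%:E)%E.
  by rewrite E -EFinM divfK ?gt_eqF.
rewrite -(ge0_integralZl_EFin _ mF (fun t Ft => fE0 t (FD t Ft)) mfF Pbc0).
apply: (@le_trans _ _ (\int[mu]_(t in F) (waterfill (k%:R + Pb / c) (n t) * f t)%:E)%E).
  apply: ge0_le_integral => //.
  - by move=> t /FD Dt; rewrite -EFinM lee_fin mulr_ge0 ?f0.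
  - by apply: emeasurable_funM => //; exact: measurable_cst.
  - exact/(measurable_funS mD FD)/mEf/measurable_waterfill.
  - move=> t [[/= Dt]] /[!in_itv] /= ntk _.
    rewrite -EFinM lee_fin ler_wpM2r ?f0 // waterfillE.
    by case: ifPn => [_|/negP[]]; lra.
apply: ge0_subset_integral => //; first exact: measurableI.
- exact/(measurable_funS mD)/mEf/measurable_waterfill.
- by move=> t [Dt _]; exact: waterfill_f_ge0.
- by move=> t [[]].
Qed.

Lemma power_superlevel_neq0 (n : T -> R) Pb : measurable_fun D n ->
  (forall t, D t -> 0 <= n t) -> 0 <= Pb -> [set l | 0 <= l /\ Pb <= power n l] !=set0.
Proof.
move=> mn n0 Pb0; have [|l l0] := @integral_waterfill_unbounded n setT Pb mn measurableT Pb0.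
  by rewrite setIT f1 lte_fin.
by rewrite setIT power_EFin // lee_fin; exists l.
Qed.

Lemma water_level_uniform_bound Pb (A : set T) (m : T -> R) : 0 <= Pb -> measurable A ->
  measurable_fun D m -> (0 < \int[mu]_(t in D `&` A) (f t)%:E)%E ->
  exists M : R, forall n : T -> R, measurable_fun D n -> (forall t, D t -> 0 <= n t) ->
    (forall t, D t -> A t -> n t = m t) -> water_level Pb n <= M.
Proof.
move=> Pb0 mA mm IA; have [M M0 PbM] := integral_waterfill_unbounded _ _ _ mm mA Pb0 IA.
exists M => n mn n0 nm; apply: water_level_le => //.
rewrite -lee_fin -power_EFin //; apply: le_trans PbM _.
rewrite (eq_integral (fun t => (waterfill M (n t) * f t)%:E)); last first.
  by move=> t /[!inE] -[Dt At]; rewrite nm.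
apply: ge0_subset_integral => //; first exact: measurableI.
- exact/mEf/measurable_waterfill.
- by move=> t Dt; exact: waterfill_f_ge0.
Qed.

Definition rate_density (sigma : R) (a J p : T -> R) (t : T) : R :=
  (2^-1 * log2 (1 + p t * a t / (sigma + J t))) * f t.

Lemma measurable_rate_density sigma (a J p : T -> R) : 0 < sigma ->
  measurable_fun D a -> measurable_fun D J -> (forall t, D t -> 0 <= J t) ->
  measurable_fun D p -> measurable_fun D (rate_density sigma a J p).
Proof.
move=> s0 ma mJ J0 mp; apply: measurable_funM => //; apply: measurable_funM.
  exact: measurable_cst.
apply: measurable_funM; last exact: measurable_cst.
apply: measurableT_comp; first exact: measurable_ln.
apply: measurable_funD; first exact: measurable_cst.
apply: measurable_funM; first exact: measurable_funM.
apply: measurable_funV => //; first by apply: measurable_funD => //; exact: measurable_cst.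
by move=> t Dt; rewrite ltr_pwDl ?J0.
Qed.

Lemma rate_density_ge0 sigma (a J p : T -> R) t : 0 < sigma -> D t ->
  0 <= a t -> 0 <= J t -> 0 <= p t -> 0 <= rate_density sigma a J p t.
Proof.
move=> s0 Dt a0 J0 p0; rewrite /rate_density /log2 mulr_ge0 ?f0 //.
rewrite mulr_ge0 ?invr_ge0 // divr_ge0 ?ln_ge0 ?ler1n //.
by rewrite lerDl divr_ge0 ?mulr_ge0 // addr_ge0 // ltW.
Qed.

(* [(2 * ln 2 * lam)^-1] is the multiplier of the power constraint, rates being in bits. *)
Lemma rate_density_lagrangian sigma lam (a J P p : T -> R) t :
  0 < sigma -> 0 < lam -> D t -> 0 < a t -> 0 <= J t -> 0 <= p t ->
  P t = waterfill lam ((sigma + J t) / a t) ->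
  rate_density sigma a J p t + (2 * ln 2 * lam)^-1 * (P t * f t) <=
  rate_density sigma a J P t + (2 * ln 2 * lam)^-1 * (p t * f t).
Proof.
move=> s0 l0 Dt a0 J0 p0 PE; set n := (sigma + J t) / a t.
have n0 : 0 < n by rewrite divr_gt0 // ltr_pwDl.
have ln20 : 0 < ln (2 : R) by rewrite ln_gt0 // ltr1n.
have cf0 : 0 <= f t / (2 * ln 2) by rewrite divr_ge0 ?f0 // mulr_ge0 // ltW.
have E (q : R) : q * a t / (sigma + J t) = q / n by rewrite /n invf_div mulrA.
have := ler_wpM2l cf0 (waterfill_argmax n lam (p t) n0 l0 p0).
rewrite /rate_density /log2 !E -PE !mulrBr.
suff -> : forall q : R, f t / (2 * ln 2) * (q / lam) = (2 * ln 2 * lam)^-1 * (q * f t).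
  suff -> : forall q : R, f t / (2 * ln 2) * ln (1 + q / n) = 2^-1 * (ln (1 + q / n) / ln 2) * f t.
    lra.
  by move=> q; field; rewrite gt_eqF.
by move=> q; field; rewrite !gt_eqF.
Qed.

Lemma waterfill_best_response sigma lam Pb (a J P p : T -> R) :
  0 < sigma -> 0 < lam -> measurable_fun D a -> measurable_fun D J ->
  (forall t, D t -> 0 < a t) -> (forall t, D t -> 0 <= J t) -> measurable_fun D P ->
  (forall t, D t -> P t = waterfill lam ((sigma + J t) / a t)) ->
  (\int[mu]_(t in D) (P t * f t)%:E = Pb%:E)%E ->
  measurable_fun D p -> (forall t, D t -> 0 <= p t) ->
  (\int[mu]_(t in D) (p t * f t)%:E <= Pb%:E)%E ->
  (\int[mu]_(t in D) (rate_density sigma a J p t)%:E <=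
   \int[mu]_(t in D) (rate_density sigma a J P t)%:E)%E.
Proof.
move=> s0 l0 ma mJ a0 J0 mP PE PPb mp p0 pPb.
have P0 t : D t -> 0 <= P t by move=> Dt; rewrite PE ?waterfill_ge0.
apply: (@ge0_integral_le_lagrangian _ _ _ _ _ _ _ (fun t => P t * f t) (fun t => p t * f t)
  (2 * ln 2 * lam)^-1 Pb) => //.
- exact: measurable_rate_density.
- exact: measurable_rate_density.
- exact: measurable_funM.
- exact: measurable_funM.
- by move=> t Dt; apply: rate_density_ge0 => //; [exact/ltW/a0 | exact: J0 | exact: p0].
- by move=> t Dt; apply: rate_density_ge0 => //; [exact/ltW/a0 | exact: J0 | exact: P0].
- by move=> t Dt; rewrite mulr_ge0 ?P0 ?f0.
- by move=> t Dt; rewrite mulr_ge0 ?p0 ?f0.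
- by rewrite invr_ge0 ltW // !mulr_gt0 // ln_gt0 // ltr1n.
- by move=> t Dt; apply: rate_density_lagrangian; rewrite ?a0 ?J0 ?p0 ?PE.
Qed.

End water_filling.

Arguments prob_density {R d T} mu D f.
Arguments power {R d T} mu D f n l.
Arguments water_level {R d T} mu D f Pb n.
Arguments rate_density {R d T} f sigma a J p t.

Section game.
Context {R : realType} {f : R * R -> R} {sigma : R}.
Hypotheses (density_f : prob_density (leb2 R) (quadrant R) f) (sigma_gt0 : 0 < sigma).
Local Notation Q := (quadrant R).

Section best_response.
Context {g g' : R * R -> R} {B : set (R * R)}.
Hypotheses (mg : measurable_fun Q g) (mg' : measurable_fun Q g') (mB : measurable B).
Hypotheses (g_gt0 : forall h, Q h -> 0 < g h) (g'_gt0 : forall h, Q h -> 0 < g' h).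

(* On [B] the other user (gain [g'], water level [y]) is decoded last, so its
   power there is its interference-free water-filling against [sigma / g']. *)
Definition noise (y : R) (h : R * R) : R :=
  (sigma + waterfill y (sigma / g' h) * g' h * \1_B h) / g h.

Definition best_level (Pb y : R) : R := water_level (leb2 R) Q f Pb (noise y).

Lemma measurable_noise y : measurable_fun Q (noise y).
Proof.
apply: measurable_funM; last exact: measurable_funV.
apply: measurable_funD; first exact: measurable_cst.
apply: measurable_funM; last exact: measurable_indic.
apply: measurable_funM => //; apply: measurable_waterfill.
apply: measurable_funM; first exact: measurable_cst.
exact: measurable_funV.
Qed.

Lemma noise_gt0 y h : Q h -> 0 < noise y h.
Proof.
move=> Qh; rewrite divr_gt0 ?g_gt0 // ltr_pwDl // mulr_ge0 ?indicE //.
by rewrite mulr_ge0 ?waterfill_ge0 // ltW ?g'_gt0.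
Qed.

Lemma noise_le y y' h : Q h -> y <= y' -> noise y h <= noise y' h.
Proof.
move=> Qh yy'; apply: ler_wpM2r; first by rewrite invr_ge0 ltW ?g_gt0.
rewrite lerD2l; apply: ler_wpM2r; first by rewrite indicE.
by apply: ler_wpM2r; [rewrite ltW ?g'_gt0 | exact: waterfill_le_l].
Qed.

Let noise_ge0 y h : Q h -> 0 <= noise y h.
Proof. by move=> Qh; rewrite ltW ?noise_gt0. Qed.

Lemma power_best_level Pb y : 0 < Pb ->
  power (leb2 R) Q f (noise y) (best_level Pb y) = Pb /\ 0 < best_level Pb y.
Proof.
move=> Pb0; apply: (power_water_level density_f (measurable_noise y) (noise_ge0 y) _ Pb0).
exact: power_superlevel_neq0 density_f _ _ (measurable_noise y) (noise_ge0 y) (ltW Pb0).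
Qed.

Lemma best_level_le Pb y y' : 0 < Pb -> y <= y' -> best_level Pb y <= best_level Pb y'.
Proof.
move=> Pb0 yy'.
apply: (water_level_le_noise density_f _ _ _ (measurable_noise y) (measurable_noise y')).
  by move=> h Qh; rewrite noise_le ?noise_ge0.
exact: power_superlevel_neq0 density_f _ _ (measurable_noise y') (noise_ge0 y') (ltW Pb0).
Qed.

Lemma best_level_bounded Pb : 0 < Pb ->
  (0 < \int[leb2 R]_(h in Q `&` ~` B) (f h)%:E)%E -> exists M, forall y, best_level Pb y <= M.
Proof.
move=> Pb0 IB; have mnoise0 : measurable_fun Q (fun h => sigma / g h).
  by apply: measurable_funM; [exact: measurable_cst | exact: measurable_funV].
have [M HM] := water_level_uniform_bound density_f _ _ _ (ltW Pb0) (measurableC mB) mnoise0 IB.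
exists M => y; apply: HM; [exact: measurable_noise | exact: noise_ge0 |].
by move=> h _ nBh; rewrite /noise indicE memNset // mulr0 addr0.
Qed.

End best_response.

Arguments noise : clear implicits.
Arguments best_level : clear implicits.

Lemma waterfill_noise_other (g g' : R * R -> R) (B : set (R * R)) x y h :
  waterfill y (noise g' g (~` B) x h) * g' h * \1_B h =
  waterfill y (sigma / g' h) * g' h * \1_B h.
Proof.
rewrite /noise !indicE in_setC; case: (h \in B) => /=; last by rewrite !mulr0.
by rewrite mulr0 addr0.
Qed.

Lemma waterfill_best_level (g g' : R * R -> R) (B : set (R * R)) Pb x y :
  measurable_fun Q g -> measurable_fun Q g' -> measurable B ->
  (forall h, Q h -> 0 < g h) -> (forall h, Q h -> 0 < g' h) ->
  0 < Pb -> best_level g g' B Pb y = x ->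
  let P h := waterfill x (noise g g' B y h) in
  let P' h := waterfill y (noise g' g (~` B) x h) in
  feasible f Pb P /\ forall p, feasible f Pb p ->
  (\int[leb2 R]_(h in Q) (rate_density f sigma g (fun h => P' h * g' h * \1_B h) p h)%:E <=
   \int[leb2 R]_(h in Q) (rate_density f sigma g (fun h => P' h * g' h * \1_B h) P h)%:E)%E.
Proof.
move=> mg mg' mB g0 g'0 Pb0 xE P P'.
have [PbE x0] := power_best_level mg mg' mB g0 g'0 _ y Pb0; rewrite xE in PbE x0.
have mP : measurable_fun Q P.
  by apply: measurable_waterfill; exact: (measurable_noise mg mg' mB g0 g'0).
have mP' : measurable_fun Q P'.
  by apply: measurable_waterfill; exact: (measurable_noise mg' mg (measurableC mB) g'0 g0).
have mJ : measurable_fun Q (fun h => P' h * g' h * \1_B h).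
  by apply: measurable_funM; [exact: measurable_funM | exact: measurable_indic].
have J0 h : Q h -> 0 <= P' h * g' h * \1_B h.
  by move=> Qh; rewrite !mulr_ge0 ?waterfill_ge0 ?indicE // ltW ?g'0.
have EP : expect f P = Pb%:E.
  rewrite /expect (power_EFin density_f (measurable_noise mg mg' mB g0 g'0 y)) ?xE ?PbE //.
    by move=> h Qh; rewrite ltW ?noise_gt0.
  exact: ltW.
split=> [|p [mp p0 Ep]]; first by split=> // [h _|]; [exact: waterfill_ge0 | rewrite EP].
apply: (waterfill_best_response density_f _ _ Pb _ _ _ _ sigma_gt0 x0 mg mJ g0 J0 mP) => // h Qh.
by rewrite /P /noise waterfill_noise_other.
Qed.

Let mfst : measurable_fun Q fst.
Proof. exact: measurable_funS measurable_fst. Qed.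
Let msnd : measurable_fun Q snd.
Proof. exact: measurable_funS measurable_snd. Qed.
Let fst_gt0 h : Q h -> 0 < h.1. Proof. by case. Qed.
Let snd_gt0 h : Q h -> 0 < h.2. Proof. by case. Qed.

Section equilibrium.
Context {Pbar1 Pbar2 : R} {D1 : set (R * R)}.
Hypotheses (mD1 : measurable D1) (Pbar1_gt0 : 0 < Pbar1) (Pbar2_gt0 : 0 < Pbar2).

Lemma best_levels_fixpoint :
  exists x y, best_level fst snd D1 Pbar1 y = x /\ best_level snd fst (~` D1) Pbar2 x = y.
Proof.
have mD1C := measurableC mD1.
pose l1 := best_level fst snd D1 Pbar1; pose l2 := best_level snd fst (~` D1) Pbar2.
have l1_le y y' : 0 <= y -> y <= y' -> l1 y <= l1 y'.
  by move=> _; exact: best_level_le mfst msnd mD1 fst_gt0 snd_gt0 _ _ _ Pbar1_gt0.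
have l2_le x x' : 0 <= x -> x <= x' -> l2 x <= l2 x'.
  by move=> _; exact: best_level_le msnd mfst mD1C snd_gt0 fst_gt0 _ _ _ Pbar2_gt0.
have l1_ge0 y : 0 <= l1 y.
  exact/ltW/(power_best_level mfst msnd mD1 fst_gt0 snd_gt0 _ y Pbar1_gt0).2.
have l2_ge0 x : 0 <= l2 x.
  exact/ltW/(power_best_level msnd mfst mD1C snd_gt0 fst_gt0 _ x Pbar2_gt0).2.
have [ID1|ID1C] := density_mass_split density_f _ mD1.
- have := best_level_bounded msnd mfst mD1C snd_gt0 fst_gt0 _ Pbar2_gt0.
  rewrite setCK => /(_ ID1) [M l2M].
  have [y _ fix_y] : exists2 y, 0 <= y & l2 (l1 y) = y.
    apply: (nondecreasing_fixpoint _ M) => [y y' y0 yy'|y _]; last by rewrite l2_ge0 l2M.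
    exact/l2_le/l1_le.
  by exists (l1 y), y.
- have [M l1M] := best_level_bounded mfst msnd mD1 fst_gt0 snd_gt0 _ Pbar1_gt0 ID1C.
  have [x _ fix_x] : exists2 x, 0 <= x & l1 (l2 x) = x.
    apply: (nondecreasing_fixpoint _ M) => [x x' x0 xx'|x _]; last by rewrite l1_ge0 l1M.
    exact/l1_le/l2_le.
  by exists x, (l2 x).
Qed.

Lemma exists_nash_equilibrium : exists P1 P2, nash_equilibrium f sigma Pbar1 Pbar2 D1 P1 P2.
Proof.
have [x [y [xE yE]]] := best_levels_fixpoint.
have [feas1 br1] := waterfill_best_level _ _ _ _ _ _ mfst msnd mD1 fst_gt0 snd_gt0 Pbar1_gt0 xE.
have := waterfill_best_level _ _ _ _ _ _ msnd mfst (measurableC mD1) snd_gt0 fst_gt0 Pbar2_gt0 yE.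
rewrite /= setCK => -[feas2 br2].
by exists (fun h => waterfill x (noise fst snd D1 y h)),
  (fun h => waterfill y (noise snd fst (~` D1) x h)).
Qed.

End equilibrium.

End game.

Lemma fading_density_prob_density (R : realType) (f : R * R -> R) :
  fading_density f -> prob_density (leb2 R) (quadrant R) f.
Proof.
case=> f0 f1 cf _; split=> //; first by apply: open_measurable_pair; exact: open_quadrant.
by apply: open_continuous_measurable_fun_pair => //; exact: open_quadrant.
Qed.

Theorem theorem2 (R : realType) (f : R * R -> R) (sigma2 Pbar1 Pbar2 : R)
    (D1 : set (R * R)) :
  0 < sigma2 -> 0 < Pbar1 -> 0 < Pbar2 ->
  fading_density f ->
  measurable D1 -> D1 `<=` quadrant R ->
  exists P1 P2 : R * R -> R, nash_equilibrium f sigma2 Pbar1 Pbar2 D1 P1 P2.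
Proof.
move=> sigma2_gt0 Pbar1_gt0 Pbar2_gt0 /fading_density_prob_density density_f mD1 _.
exact (exists_nash_equilibrium density_f sigma2_gt0 mD1 Pbar1_gt0 Pbar2_gt0).
Qed.
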